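(* Let $G=(V,(c_{xy})_{x,y\in V})$ be a connected weighted finite graph and $\alpha=(\alpha_x)_{x\in V}$ positive site-weights. Then $$(1\wedge \alpha_{\min})\,\mathrm{gap}_{\rm RW}(G,\alpha)\le \mathrm{gap}_{\rm SIP}(G,\alpha)\le \mathrm{gap}_{\rm RW}(G,\alpha),$$ where $\alpha_{\min}:=\min_{x\in V}\alpha_x$.
   Context: $G=(V,(c_{xy}))$ is a finite graph with $|V|=n$ and symmetric non-negative edge weights $c_{xy}=c_{yx}\ge 0$, connected (the graph of pairs with $c_{xy}>0$ is connected). For $k\in\mathbb N$, $\Xi_k:=\{\eta\in\mathbb N_0^V:\sum_x\eta_x=k\}$. For $\eta$ with $\eta_x\ge1$, $\eta-\delta_x+\delta_y$ is the configuration obtained by moving one particle from $x$ to $y$. The symmetric inclusion process ${\rm SIP}_k(G,\alpha)$ is the continuous-time Markov chain on $\Xi_k$ with generator $L_kf(\eta)=\sum_{x\in V}\eta_x\sum_{y\in V}c_{xy}(\alpha_y+\eta_y)(f(\eta-\delta_x+\delta_y)-f(\eta))$. It is reversible with respect to $\mu_{\alpha,k}(\eta)=Z_{\alpha,k}^{-1}\prod_{x}\frac{\Gamma(\alpha_x+\eta_x)}{\Gamma(\alpha_x)\eta_x!}$ (normalized), and $\mathrm{gap}_k(G,\alpha)$ denotes the second smallest eigenvalue of $-L_k$ (smallest nonzero one). The random walk ${\rm RW}(G,\alpha)$ is the Markov chain on $V$ with generator $A_\alpha f(x)=\sum_{y}c_{xy}\alpha_y(f(y)-f(x))$; note $\mathrm{gap}_1(G,\alpha)$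 equals its spectral gap. Define $\mathrm{gap}_{\rm RW}(G,\alpha):=\mathrm{gap}_1(G,\alpha)$ and $\mathrm{gap}_{\rm SIP}(G,\alpha):=\inf_{k\ge2}\mathrm{gap}_k(G,\alpha)$. *)

From HB Require Import structures.
From mathcomp Require Import all_boot all_order all_algebra.
From mathcomp Require Import boolp classical_sets reals.
Set Implicit Arguments. Unset Strict Implicit. Unset Printing Implicit Defensive.
Import Order.TTheory GRing.Theory Num.Theory.
Local Open Scope ring_scope.
Local Open Scope classical_set_scope.

Section SIP.
Variables (R : realType) (V : finType).

Definition conf := {ffun V -> nat}.

Definition inXi (k : nat) (eta : conf) : bool := (\sum_(x : V) eta x == k)%N.

(* eta - delta_x + delta_y (only used when eta x >= 1) *)
Definition move (eta : conf) (x y : V) : conf :=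
  [ffun z => (eta z - (z == x) + (z == y))%N].

Definition Lgen (c : V -> V -> R) (alpha : V -> R) (f : conf -> R) (eta : conf) : R :=
  \sum_(x : V) (eta x)%:R *
    \sum_(y : V) c x y * (alpha y + (eta y)%:R) * (f (move eta x y) - f eta).

Definition eigen_negL (c : V -> V -> R) (alpha : V -> R) (k : nat) (lam : R) : Prop :=
  exists f : conf -> R,
    (exists eta, inXi k eta /\ f eta != 0) /\
    (forall eta, inXi k eta -> - Lgen c alpha f eta = lam * f eta).

Definition gap (c : V -> V -> R) (alpha : V -> R) (k : nat) : R :=
  inf [set lam : R | lam != 0 /\ eigen_negL c alpha k lam].

Definition gapRW c alpha := gap c alpha 1.

Definition gapSIP c alpha : R := inf [set gap c alpha k | k in [set k : nat | (2 <= k)%N]].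

Definition alpha_min (alpha : V -> R) : R := inf (range alpha).

End SIP.

From HB Require Import structures.
From mathcomp Require Import all_boot all_order all_algebra.
From mathcomp Require Import boolp classical_sets reals topology normedtype derive.
From mathcomp Require Import zify ring lra.
Import Order.TTheory GRing.Theory Num.Theory.
Import numFieldNormedType.Exports.
Set Implicit Arguments. Unset Strict Implicit. Unset Printing Implicit Defensive.
Local Open Scope ring_scope.

(* Lower bound, by induction on the number k of particles.  The lowering operator
   (lowering f)(xi) = sum_x (alpha_x + xi_x) f(xi + delta_x) intertwines L_(k+1) with L_k,
   so an eigenfunction f of -L_(k+1) either yields the eigenfunction lowering f of -L_k
   with the same eigenvalue, or is annihilated by it.  In the second case, for every xi in
   Xi_k the function x |-> f(xi + delta_x) is centred for the weights alpha + xi; the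
   Poincare inequality of the random walk, transferred from the weights alpha to
   alpha + xi at the price of the factor (1 /\ alpha_min) / (k + 1), then bounds the
   eigenvalue from below, because both the Dirichlet form and (k + 1) times the norm of f
   are sums over Xi_k of the corresponding quantities for these functions.  The Poincare
   inequality with constant gap_RW holds because a minimiser of the Dirichlet form on the
   centred unit sphere exists by compactness and is an eigenfunction of the walk.

   Upper bound: if h is an eigenfunction of the walk, eta |-> sum_x eta_x h(x) is an
   eigenfunction of every L_k with the same eigenvalue. *)

Section Configurations.
Variables (R : realType) (V : finType).
Implicit Types (eta xi : conf V) (h : V -> R).

Definition add_particle xi u : conf V := [ffun z => (xi z + (z == u))%N].

Lemma move_add_particle xi x y : move (add_particle xi x) x y = add_particle xi y.
Proof. by apply/ffunP => z; rewrite !ffunE addnK. Qed.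

Lemma move_add_particleC xi x u v : (0 < xi u)%N ->
  move (add_particle xi x) u v = add_particle (move xi u v) x.
Proof.
move=> xu; apply/ffunP => z; rewrite !ffunE.
case: (eqVneq z u) => [->|_]; last by move: (z == x) (z == v) => [] []; lia.
by move: (u == x) (u == v) xu => [] []; lia.
Qed.

Lemma add_particle_move xi u v : (0 < xi u)%N ->
  add_particle (move xi u v) u = add_particle xi v.
Proof.
move=> xu; apply/ffunP => z; rewrite !ffunE.
case: (eqVneq z u) => [->|_]; last by move: (z == v) => []; lia.
by move: (u == v) xu => []; lia.
Qed.

Lemma move_id eta x : (0 < eta x)%N -> move eta x x = eta.
Proof. by move=> ex; apply/ffunP => z; rewrite !ffunE; case: (eqVneq z x) => [->|_] /=; lia. Qed.

Lemma inXi_le k eta x : inXi k eta -> (eta x <= k)%N.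
Proof. by move/eqP <-; rewrite (bigD1 x) //= leq_addr. Qed.

Lemma inXi_add_particle k xi u : inXi k.+1 (add_particle xi u) = inXi k xi.
Proof.
rewrite /inXi (eq_bigr (fun z => xi z + (z == u))%N) => [|z _]; last by rewrite ffunE.
have one_u : (\sum_z (z == u) = 1)%N by rewrite (bigD1 u) //= eqxx big1 // => z /negbTE ->.
by rewrite big_split /= one_u addn1 eqSS.
Qed.

Lemma sumr_indicator (F : V -> R) x : \sum_z (z == x)%:R * F z = F x.
Proof.
rewrite (bigD1 x) //= eqxx mul1r big1 ?addr0 // => z /negbTE ->.
by rewrite mul0r.
Qed.

Lemma discrete_green (K : V -> V -> R) (u : V -> R) h : (forall x y, K x y = K y x) ->
  \sum_x \sum_y K x y * u x * (h y - h x) =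
  - (\sum_x \sum_y K x y * (u y - u x) * (h y - h x)) / 2.
Proof.
move=> Ks; set S := \sum_x \sum_y K x y * u x * (h y - h x).
have swapS : \sum_x \sum_y K x y * u y * (h y - h x) = - S.
  rewrite exchange_big /S -sumrN; apply: eq_bigr => x _.
  by rewrite -sumrN; apply: eq_bigr => y _; rewrite Ks; ring.
have -> : \sum_x \sum_y K x y * (u y - u x) * (h y - h x) =
    \sum_x \sum_y K x y * u y * (h y - h x) - S.
  rewrite /S -sumrB; apply: eq_bigr => x _.
  by rewrite -sumrB; apply: eq_bigr => y _; ring.
by rewrite swapS; field.
Qed.

Lemma sum_sym_diff_eq0 (K : V -> V -> R) h : (forall x y, K x y = K y x) ->
  \sum_x \sum_y K x y * (h y - h x) = 0.
Proof.
move=> Ks; have := discrete_green (fun _ => 1) h Ks.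
under eq_bigr => x _ do under eq_bigr => y _ do rewrite mulr1.
move=> ->; rewrite big1 ?oppr0 ?mul0r // => x _.
by rewrite big1 // => y _; rewrite subrr mulr0 mul0r.
Qed.

Definition lift_fun h eta : R := \sum_x (eta x)%:R * h x.

Lemma lift_fun_move h eta x y : (0 < eta x)%N ->
  lift_fun h (move eta x y) = lift_fun h eta - h x + h y.
Proof.
move=> ex; rewrite /lift_fun.
have split_move z : ((move eta x y) z)%:R * h z =
    (eta z)%:R * h z - (z == x)%:R * h z + (z == y)%:R * h z.
  rewrite ffunE natrD; case: (eqVneq z x) => [->|_] /=; last by rewrite subn0 mulr0n; ring.
  by rewrite natrB //; ring.
under eq_bigr => z _ do rewrite split_move.
by rewrite big_split /= sumrB !sumr_indicator.
Qed.

End Configurations.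

Section RandomWalkLift.
Variables (R : realType) (V : finType) (c : V -> V -> R) (alpha : V -> R).
Hypothesis c_sym : forall x y, c x y = c y x.
Implicit Types (eta : conf V) (h : V -> R).

Definition rw_gen h x := \sum_y c x y * alpha y * (h y - h x).

Lemma sum_occupied_eq eta (A B : V -> R) : (forall x, (0 < eta x)%N -> A x = B x) ->
  \sum_x (eta x)%:R * A x = \sum_x (eta x)%:R * B x.
Proof.
by move=> AB; apply: eq_bigr => x _; case: (posnP (eta x)) => [->|/AB->]; rewrite ?mul0r.
Qed.

Lemma Lgen_lift_fun h eta : Lgen c alpha (lift_fun h) eta = \sum_x (eta x)%:R * rw_gen h x.
Proof.
rewrite /Lgen (@sum_occupied_eq _ _ (fun x =>
   \sum_y c x y * (alpha y + (eta y)%:R) * (h y - h x))); last first.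
  by move=> x ex; apply: eq_bigr => y _; rewrite lift_fun_move //; congr (_ * _); ring.
have split_rate x : (eta x)%:R * \sum_y c x y * (alpha y + (eta y)%:R) * (h y - h x)
   = (eta x)%:R * rw_gen h x + \sum_y ((eta x)%:R * (eta y)%:R * c x y) * (h y - h x).
  by rewrite /rw_gen !mulr_sumr -big_split; apply: eq_bigr => y _ /=; ring.
under eq_bigr => x _ do rewrite split_rate.
by rewrite big_split /= sum_sym_diff_eq0 ?addr0 // => x y; rewrite c_sym; ring.
Qed.

Lemma eigen_negL_lift k lam h : (0 < k)%N -> (forall x, - rw_gen h x = lam * h x) ->
  (exists x, h x != 0) -> eigen_negL c alpha k lam.
Proof.
move=> k_gt0 eigh [x0 hx0]; exists (lift_fun h); split.
  pose eta0 : conf V := [ffun z => (k * (z == x0))%N].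
  have eta0_other z : z != x0 -> eta0 z = 0%N by move=> /negbTE zx0; rewrite ffunE zx0 muln0.
  exists eta0; split.
    by rewrite /inXi (bigD1 x0) //= ffunE eqxx muln1 big1 ?addn0 // => z /eta0_other.
  rewrite /lift_fun (bigD1 x0) //= ffunE eqxx muln1 big1 ?addr0.
    by rewrite mulf_neq0 // pnatr_eq0 -lt0n.
  by move=> z /eta0_other ->; rewrite mul0r.
move=> eta _; rewrite Lgen_lift_fun -sumrN /lift_fun mulr_sumr; apply: eq_bigr => x _.
by rewrite -mulrN eigh; ring.
Qed.

End RandomWalkLift.

Section SumOverXi.
Variables (R : realType) (V : finType).
Local Notation bconf N := {ffun V -> 'I_N.+1}.

Definition conf_of N (e : bconf N) : conf V := [ffun x => nat_of_ord (e x)].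

(* Only configurations with occupation numbers at most [N] are summed over:
   this is all of Xi_k as soon as k <= N. *)
Definition sumXi N k (F : conf V -> R) := \sum_(e : bconf N | inXi k (conf_of e)) F (conf_of e).

Definition bump N u (e : bconf N) : bconf N := [ffun z => inord (e z + (z == u))].
Definition unbump N u (e : bconf N) : bconf N := [ffun z => inord (e z - (z == u))].

Lemma bump_small N u (e : bconf N) z : (e u < N)%N -> (e z + (z == u) < N.+1)%N.
Proof. by move=> eu; case: (eqVneq z u) => [->|_] /=; rewrite ?addn1 ?addn0. Qed.

Lemma conf_of_bump N u (e : bconf N) : (e u < N)%N ->
  conf_of (bump u e) = add_particle (conf_of e) u.
Proof. by move=> eu; apply/ffunP => z; rewrite !ffunE (inordK (bump_small z eu)). Qed.

Lemma bumpK N u (e : bconf N) : (e u < N)%N -> unbump u (bump u e) = e.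
Proof.
move=> eu; apply/ffunP => z; apply: val_inj.
by rewrite !ffunE /= (inordK (bump_small z eu)) addnK inordK.
Qed.

Lemma unbumpK N u (e : bconf N) : (0 < e u)%N -> bump u (unbump u e) = e.
Proof.
move=> eu; apply/ffunP => z; apply: val_inj; rewrite !ffunE /=.
have small : (e z - (z == u) < N.+1)%N := leq_ltn_trans (leq_subr _ _) (ltn_ord (e z)).
rewrite (inordK small).
by have := ltn_ord (e z); case: (eqVneq z u) => [->|_] /= ez; rewrite inordK; lia.
Qed.

(* [(xi, u) |-> (xi + delta_u, u)] is a bijection from Xi_k * V onto the pairs
   (eta, u) with eta in Xi_(k+1) and eta_u > 0. *)
Lemma sumXi_add_particle N k (G : conf V -> V -> R) : (k < N)%N ->
  sumXi N k.+1 (fun eta => \sum_u (eta u)%:R * G eta u) =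
  sumXi N k (fun xi => \sum_u (xi u).+1%:R * G (add_particle xi u) u).
Proof.
move=> kN; rewrite /sumXi exchange_big [RHS]exchange_big; apply: eq_bigr => u _.
rewrite (bigID (fun e : bconf N => (0 < e u)%N)) /= [X in _ + X]big1 ?addr0; last first.
  by move=> e /andP[_]; rewrite -eqn0Ngt ffunE => /eqP ->; rewrite mul0r.
rewrite (reindex_onto (bump u) (unbump u)) => [|e /andP[_]]; last exact: unbumpK.
have occ_small (e : bconf N) : inXi k (conf_of e) -> (e u < N)%N.
  by move=> /(inXi_le u); rewrite ffunE => /leq_ltn_trans; apply.
have pred_eq (e : bconf N) : inXi k.+1 (conf_of (bump u e)) && (0 < bump u e u)%N
    && (unbump u (bump u e) == e) = inXi k (conf_of e).
  case: (ltnP (e u) N) => [eu|eu].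
    rewrite conf_of_bump // inXi_add_particle bumpK // eqxx andbT.
    by rewrite ffunE eqxx inordK addn1 ?ltn0Sn ?andbT ?ltnS.
  have -> : (0 < bump u e u)%N = false.
    by rewrite ffunE eqxx /inord /insubd insubN //= -leqNgt addn1 ltnS.
  by rewrite andbF /=; apply/esym/negP => /occ_small; rewrite ltnNge eu.
apply: eq_big => e; first exact: pred_eq.
by rewrite pred_eq => /occ_small eu; rewrite conf_of_bump // ffunE eqxx addn1.
Qed.

End SumOverXi.

Section Reversibility.
Variables (R : realType) (V : finType) (alpha : V -> R).
Implicit Types (xi : conf V).

(* [mu_site a n = Gamma (a + n) / (Gamma a * n`!)], so [mu_weight] is the
   unnormalised reversible measure mu_{alpha,k}. *)
Definition mu_site (a : R) n : R := \prod_(i < n) ((a + i%:R) / i.+1%:R).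
Definition mu_weight xi : R := \prod_x mu_site (alpha x) (xi x).
Definition rate xi x : R := alpha x + (xi x)%:R.

Lemma mu_site_gt0 a n : 0 < a -> 0 < mu_site a n.
Proof.
move=> a_gt0; apply: prodr_gt0 => i _; apply: divr_gt0; last by rewrite ltr0Sn.
by have := ler0n R i; lra.
Qed.

Lemma mu_weight_gt0 xi : (forall x, 0 < alpha x) -> 0 < mu_weight xi.
Proof. by move=> alpha_gt0; apply: prodr_gt0 => x _; apply: mu_site_gt0. Qed.

Lemma mu_weight_add_particle xi u :
  mu_weight (add_particle xi u) * (xi u).+1%:R = mu_weight xi * rate xi u.
Proof.
rewrite /mu_weight (bigD1 u) //= [in RHS](bigD1 u) //= ffunE eqxx addn1.
rewrite /mu_site big_ord_recr /= (eq_bigr (fun x => mu_site (alpha x) (xi x))); last first.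
  by move=> z /negbTE zu; rewrite ffunE zu addn0.
by rewrite /rate; field; rewrite addrC natr1 pnatr_eq0.
Qed.

Lemma rate_ge0 xi x : 0 <= alpha x -> 0 <= rate xi x.
Proof. by rewrite /rate; have := ler0n R (xi x); lra. Qed.

Lemma rate_move xi u v x : (0 < xi u)%N ->
  rate (move xi u v) x = rate xi x - (x == u)%:R + (x == v)%:R.
Proof.
move=> xu; rewrite /rate ffunE natrD.
case: (eqVneq x u) => [->|_] /=; last by rewrite subn0 subr0 addrA.
by rewrite natrB // !addrA.
Qed.

End Reversibility.

Section Intertwining.
Variables (R : realType) (V : finType) (c : V -> V -> R) (alpha : V -> R).
Hypothesis c_sym : forall x y, c x y = c y x.
Implicit Types (xi : conf V) (f : conf V -> R).
Local Notation rate := (rate alpha).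

Definition lowering f xi := \sum_x rate xi x * f (add_particle xi x).

Lemma lowering_jump f xi u v : (0 < xi u)%N ->
  \sum_x rate xi x * (c u v * (rate xi v + (v == x)%:R) *
      (f (add_particle (move xi u v) x) - f (add_particle xi x)))
  = c u v * rate xi v * (lowering f (move xi u v) - lowering f xi).
Proof.
move=> xu; set xi' := move xi u v.
have lowering_xi' : lowering f xi' =
    \sum_x rate xi x * f (add_particle xi' x) - f (add_particle xi' u) + f (add_particle xi' v).
  rewrite /lowering; under eq_bigr => x _ do rewrite rate_move // mulrDl mulrBl.
  by rewrite big_split sumrB /= !sumr_indicator.
transitivity (\sum_x (c u v * rate xi v *
      (rate xi x * f (add_particle xi' x) - rate xi x * f (add_particle xi x))
   + (x == v)%:R * (c u v * rate xi x * (f (add_particle xi' x) - f (add_particle xi x))))).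
  apply: eq_bigr => x _; rewrite (eq_sym v x).
  by case: (eqVneq x v) => [->|_] /=; ring.
rewrite big_split /= sumr_indicator -mulr_sumr sumrB lowering_xi' /xi' add_particle_move //.
by rewrite /lowering; ring.
Qed.

Lemma Lgen_add_particle f xi x :
  Lgen c alpha f (add_particle xi x) =
  \sum_u (xi u)%:R * \sum_v c u v * (rate xi v + (v == x)%:R) *
      (f (add_particle (move xi u v) x) - f (add_particle xi x))
  + \sum_v c x v * (rate xi v + (v == x)%:R) * (f (add_particle xi v) - f (add_particle xi x)).
Proof.
rewrite /Lgen.
have split_site u : ((add_particle xi x) u)%:R * \sum_v c u v *
    (alpha v + ((add_particle xi x) v)%:R) * (f (move (add_particle xi x) u v) - f (add_particle xi x))
  = ((xi u)%:R + (u == x)%:R) * \sum_v c u v * (rate xi v + (v == x)%:R) *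
      (f (move (add_particle xi x) u v) - f (add_particle xi x)).
  rewrite ffunE natrD; congr (_ * _); apply: eq_bigr => v _.
  by rewrite ffunE natrD /rate addrA.
under eq_bigr => u _ do rewrite split_site mulrDl.
rewrite big_split /= sumr_indicator; congr (_ + _).
  by apply: sum_occupied_eq => u xu; apply: eq_bigr => v _; rewrite move_add_particleC.
by apply: eq_bigr => v _; rewrite move_add_particle.
Qed.

Lemma sum_rate_added_jump_eq0 f xi :
  \sum_x rate xi x * \sum_v c x v * (rate xi v + (v == x)%:R) *
     (f (add_particle xi v) - f (add_particle xi x)) = 0.
Proof.
transitivity (\sum_x \sum_v (rate xi x * rate xi v * c x v) *
    (f (add_particle xi v) - f (add_particle xi x))).
  apply: eq_bigr => x _; rewrite mulr_sumr; apply: eq_bigr => v _.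
  by case: (eqVneq v x) => [->|_]; rewrite ?subrr /=; ring.
by apply: sum_sym_diff_eq0 => x y; rewrite c_sym; ring.
Qed.

Lemma Lgen_lowering f xi :
  \sum_x rate xi x * Lgen c alpha f (add_particle xi x) = Lgen c alpha (lowering f) xi.
Proof.
under eq_bigr => x _ do rewrite Lgen_add_particle mulrDr.
rewrite big_split /= sum_rate_added_jump_eq0 addr0 /Lgen.
transitivity (\sum_u (xi u)%:R * \sum_v \sum_x rate xi x * (c u v * (rate xi v + (v == x)%:R) *
      (f (add_particle (move xi u v) x) - f (add_particle xi x)))).
  under eq_bigr => x _ do rewrite mulr_sumr.
  rewrite exchange_big; apply: eq_bigr => u _.
  under eq_bigr => x _ do rewrite mulrCA mulr_sumr.
  by rewrite exchange_big mulr_sumr; apply: eq_bigr => v _; rewrite mulr_sumr.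
by apply: sum_occupied_eq => u xu; apply: eq_bigr => v _; rewrite lowering_jump.
Qed.

End Intertwining.

Section DirichletForm.
Variables (R : realType) (V : finType) (c : V -> V -> R).
Hypothesis c_ge0 : forall x y, 0 <= c x y.
Implicit Types (b h : V -> R).

(* Every pair of sites is counted twice, hence the factors [/ 2] below. *)
Definition dirichlet b h := \sum_x \sum_y b x * b y * c x y * (h y - h x) ^+ 2.

Lemma dirichlet_ge0 b h : (forall x, 0 <= b x) -> 0 <= dirichlet b h.
Proof.
move=> b_ge0; apply: sumr_ge0 => x _; apply: sumr_ge0 => y _.
by rewrite mulr_ge0 ?sqr_ge0 // !mulr_ge0.
Qed.

Lemma dirichlet_le b1 b2 h : (forall x, 0 <= b1 x) -> (forall x, b1 x <= b2 x) ->
  dirichlet b1 h <= dirichlet b2 h.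
Proof.
move=> b1_ge0 b12; apply: ler_sum => x _; apply: ler_sum => y _.
by rewrite ler_wpM2r ?sqr_ge0 // ler_wpM2r // ler_pM.
Qed.

Lemma dirichletZ b s h : dirichlet b (fun x => s * h x) = s ^+ 2 * dirichlet b h.
Proof.
rewrite /dirichlet mulr_sumr; apply: eq_bigr => x _.
by rewrite mulr_sumr; apply: eq_bigr => y _; ring.
Qed.

Lemma dirichlet_shift b h M : dirichlet b (fun x => h x - M) = dirichlet b h.
Proof. by apply: eq_bigr => x _; apply: eq_bigr => y _; congr (_ * _ ^+ 2); ring. Qed.

End DirichletForm.

Section WeightedSums.
Variables (R : realType) (V : finType) (w : V -> R).
Implicit Types (h : V -> R).

Definition wsum h := \sum_x w x * h x.
Definition wsum2 h := \sum_x w x * h x ^+ 2.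

Lemma wsum_center h : \sum_x w x != 0 ->
  wsum (fun x => h x - wsum h / \sum_x w x) = 0.
Proof.
move=> A_neq0; rewrite /wsum; under eq_bigr => x _ do rewrite mulrBr.
by rewrite sumrB -mulr_suml -/(wsum h); field.
Qed.

Lemma wsum2_le_shift h M : (forall x, 0 <= w x) -> wsum h = 0 ->
  wsum2 h <= wsum2 (fun x => h x - M).
Proof.
move=> w_ge0 h0; have -> : wsum2 (fun x => h x - M) =
    wsum2 h - 2%:R * M * wsum h + M ^+ 2 * \sum_x w x.
  rewrite /wsum2 /wsum !mulr_sumr -sumrB -big_split /=.
  by apply: eq_bigr => x _; ring.
by rewrite h0 mulr0 subr0 lerDl mulr_ge0 ?sqr_ge0 ?sumr_ge0.
Qed.

Lemma wsumZ s h : wsum (fun x => s * h x) = s * wsum h.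
Proof. by rewrite /wsum mulr_sumr; apply: eq_bigr => x _; ring. Qed.

Lemma wsum2Z s h : wsum2 (fun x => s * h x) = s ^+ 2 * wsum2 h.
Proof. by rewrite /wsum2 mulr_sumr; apply: eq_bigr => x _; ring. Qed.

Lemma wsum2_ge0 h : (forall x, 0 <= w x) -> 0 <= wsum2 h.
Proof. by move=> w_ge0; apply: sumr_ge0 => x _; rewrite mulr_ge0 ?sqr_ge0. Qed.

Lemma wsum2_neq0 h : wsum2 h != 0 -> exists x, h x != 0.
Proof.
move=> nz; apply/existsP; apply: contraNT nz => /existsPn h0.
by apply/eqP/big1 => x _; move/negPn/eqP: (h0 x) => ->; rewrite expr0n mulr0.
Qed.

End WeightedSums.

Section SpectralIdentities.
Variables (R : realType) (V : finType) (c : V -> V -> R) (alpha : V -> R).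
Hypothesis c_sym : forall x y, c x y = c y x.
Local Notation mu := (mu_weight alpha).
Local Notation rate := (rate alpha).

Lemma sumXi_dirichlet k (f : conf V -> R) :
  sumXi k.+1 k.+1 (fun eta => mu eta * f eta * (- Lgen c alpha f eta)) =
  sumXi k.+1 k (fun xi => mu xi * (dirichlet c (rate xi) (fun x => f (add_particle xi x)) / 2)).
Proof.
pose G eta u := - (mu eta * f eta * \sum_v c u v * (alpha v + (eta v)%:R) *
                                   (f (move eta u v) - f eta)).
transitivity (sumXi k.+1 k.+1 (fun eta => \sum_u (eta u)%:R * G eta u)).
  apply: eq_bigr => e _; rewrite /Lgen /G mulrN mulr_sumr -sumrN.
  by apply: eq_bigr => u _; ring.
rewrite (sumXi_add_particle _ (ltnSn k)) /sumXi; apply: eq_bigr => e _.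
set xi := conf_of e; set hh := fun x => f (add_particle xi x).
have jump_rates u : \sum_v c u v * (alpha v + ((add_particle xi u) v)%:R) *
      (f (move (add_particle xi u) u v) - f (add_particle xi u)) =
    \sum_v c u v * rate xi v * (hh v - hh u).
  apply: eq_bigr => v _; rewrite move_add_particle /hh ffunE natrD addrA.
  by case: (eqVneq v u) => [->|_] /=; rewrite ?subrr ?mulr0 ?addr0.
have site_term u : (xi u).+1%:R * G (add_particle xi u) u =
    mu xi * (- \sum_v (rate xi u * rate xi v * c u v) * hh u * (hh v - hh u)).
  rewrite /G jump_rates.
  transitivity (- ((mu (add_particle xi u) * (xi u).+1%:R) * hh u *
      \sum_v c u v * rate xi v * (hh v - hh u))); first by rewrite /hh; ring.
  rewrite mu_weight_add_particle mulr_sumr [RHS]mulrN mulr_sumr; congr (- _).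
  by apply: eq_bigr => v _; ring.
under eq_bigr => u _ do rewrite site_term.
rewrite -mulr_sumr sumrN discrete_green; last by move=> x y; rewrite c_sym; ring.
rewrite mulNr opprK /dirichlet; congr (_ * (_ / _)).
by apply: eq_bigr => x _; apply: eq_bigr => y _; rewrite expr2; ring.
Qed.

Lemma sumXi_norm k (f : conf V -> R) :
  k.+1%:R * sumXi k.+1 k.+1 (fun eta => mu eta * f eta ^+ 2) =
  sumXi k.+1 k (fun xi => mu xi * \sum_x rate xi x * f (add_particle xi x) ^+ 2).
Proof.
transitivity (sumXi k.+1 k.+1 (fun eta => \sum_u (eta u)%:R * (mu eta * f eta ^+ 2))).
  rewrite /sumXi mulr_sumr; apply: eq_bigr => e /eqP sum_e.
  by rewrite -mulr_suml -natr_sum sum_e.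
rewrite (sumXi_add_particle _ (ltnSn k)) /sumXi; apply: eq_bigr => e _.
rewrite mulr_sumr; apply: eq_bigr => u _.
by rewrite [in RHS]mulrA -[in RHS]mu_weight_add_particle; ring.
Qed.

End SpectralIdentities.

Section Spectrum.
Variables (R : realType) (V : finType) (c : V -> V -> R) (alpha : V -> R).
Hypothesis c_sym : forall x y, c x y = c y x.
Hypothesis c_ge0 : forall x y, 0 <= c x y.
Hypothesis alpha_gt0 : forall x, 0 < alpha x.
Local Notation mu := (mu_weight alpha).

Lemma eigen_negL0 lam : lam != 0 -> ~ eigen_negL c alpha 0 lam.
Proof.
move=> lam_neq0 [f [[eta0 [eta0_in f_eta0]] eig]].
have eta0_0 x : eta0 x = 0%N.
  by move: eta0_in; rewrite /inXi sum_nat_eq0 => /forallP/(_ x)/eqP.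
have := eig eta0 eta0_in; rewrite /Lgen big1 => [|x _]; last by rewrite eta0_0 mul0r.
by move/eqP; rewrite oppr0 eq_sym mulf_eq0 (negbTE lam_neq0) (negbTE f_eta0).
Qed.

Lemma sumXi_norm_gt0 k (f : conf V -> R) eta0 : inXi k.+1 eta0 -> f eta0 != 0 ->
  0 < sumXi k.+1 k.+1 (fun eta => mu eta * f eta ^+ 2).
Proof.
move=> eta0_in f_eta0.
pose e0 : {ffun V -> 'I_k.+2} := [ffun x => inord (eta0 x)].
have e0E : conf_of e0 = eta0.
  by apply/ffunP => x; rewrite !ffunE inordK // ltnS inXi_le.
rewrite /sumXi (bigD1 e0) /=; last by rewrite e0E.
apply: ltr_wpDr.
  by apply: sumr_ge0 => e _; rewrite mulr_ge0 ?sqr_ge0 // ltW // mu_weight_gt0.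
by rewrite e0E mulr_gt0 ?mu_weight_gt0 // exprn_even_gt0 //= f_eta0 orbT.
Qed.

Lemma eigen_rayleigh k lam (f : conf V -> R) :
  (forall eta, inXi k.+1 eta -> - Lgen c alpha f eta = lam * f eta) ->
  lam * sumXi k.+1 k.+1 (fun eta => mu eta * f eta ^+ 2) =
  sumXi k.+1 k (fun xi => mu xi * (dirichlet c (rate alpha xi) (fun x => f (add_particle xi x)) / 2)).
Proof.
move=> eig; rewrite -sumXi_dirichlet // /sumXi mulr_sumr.
by apply: eq_bigr => e e_in; rewrite eig //; ring.
Qed.

Lemma eigen_negL_ge0 k lam : eigen_negL c alpha k.+1 lam -> 0 <= lam.
Proof.
move=> [f [[eta0 [eta0_in f_eta0]] eig]].
have norm_gt0 := sumXi_norm_gt0 eta0_in f_eta0.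
rewrite -(pmulr_lge0 _ norm_gt0) eigen_rayleigh //.
apply: sumr_ge0 => e _; apply: mulr_ge0; first exact: ltW (mu_weight_gt0 _ alpha_gt0).
by rewrite divr_ge0 // dirichlet_ge0 // => x; apply/rate_ge0/ltW.
Qed.

End Spectrum.

Section LowerBound.
Variables (R : realType) (V : finType) (c : V -> V -> R) (alpha : V -> R).
Hypothesis c_sym : forall x y, c x y = c y x.
Hypothesis c_ge0 : forall x y, 0 <= c x y.
Hypothesis alpha_gt0 : forall x, 0 < alpha x.
Variables (g m : R).
Hypothesis g_ge0 : 0 <= g.
Hypothesis m_ge0 : 0 <= m.
Hypothesis m_le1 : m <= 1.
Hypothesis m_le_alpha : forall x, m <= alpha x.
Hypothesis poincare : forall h, wsum alpha h = 0 -> g * wsum2 alpha h <= dirichlet c alpha h / 2.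
Local Notation mu := (mu_weight alpha).

Lemma rate_le_alpha k xi x : inXi k xi -> m * rate alpha xi x <= k.+1%:R * alpha x.
Proof.
move=> xi_in; have xi_le : (xi x)%:R <= k%:R :> R by rewrite ler_nat inXi_le.
have := ler_pM m_ge0 (ler0n R (xi x)) (m_le_alpha x) xi_le.
have := ler_wpM2r (ltW (alpha_gt0 x)) m_le1.
by rewrite /rate -natr1 mul1r; nra.
Qed.

Lemma poincare_rate k xi h : inXi k xi -> wsum (rate alpha xi) h = 0 ->
  (m * g / k.+1%:R) * wsum2 (rate alpha xi) h <= dirichlet c (rate alpha xi) h / 2.
Proof.
move=> xi_in h_centered.
have rate_xi_ge0 x : 0 <= rate alpha xi x by apply/rate_ge0/ltW.
have [A0|A_neq0] := eqVneq (\sum_x alpha x) 0.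
  have V0 (x : V) : False.
    have : alpha x <= \sum_y alpha y.
      by rewrite (bigD1 x) //= lerDl sumr_ge0 // => y _; rewrite ltW.
    by rewrite A0; have := alpha_gt0 x; lra.
  have sum0 (F : V -> R) : \sum_x F x = 0 by rewrite big1 // => x; case: (V0 x).
  by rewrite /wsum2 /dirichlet !sum0 mulr0 mul0r.
set M := wsum alpha h / \sum_x alpha x; set h' := fun x => h x - M.
have k_gt0 : 0 < k.+1%:R :> R by rewrite ltr0Sn.
have rate_to_alpha : m * wsum2 (rate alpha xi) h <= k.+1%:R * wsum2 alpha h'.
  apply: le_trans (ler_wpM2l m_ge0 (wsum2_le_shift M rate_xi_ge0 h_centered)) _.
  rewrite /wsum2 !mulr_sumr; apply: ler_sum => x _.
  by have := ler_wpM2r (sqr_ge0 (h' x)) (rate_le_alpha x xi_in); rewrite -!mulrA.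
have alpha_to_rate : g * wsum2 alpha h' <= dirichlet c (rate alpha xi) h / 2.
  apply: le_trans (poincare (wsum_center h A_neq0)) _.
  rewrite dirichlet_shift; apply: ler_wpM2r; first by rewrite invr_ge0.
  by apply: dirichlet_le => // x; [exact: ltW (alpha_gt0 x) | rewrite /rate lerDl ler0n].
apply: le_trans alpha_to_rate.
have -> : m * g / k.+1%:R * wsum2 (rate alpha xi) h =
    g / k.+1%:R * (m * wsum2 (rate alpha xi) h) by ring.
apply: le_trans (ler_wpM2l _ rate_to_alpha) _; first by rewrite divr_ge0 // ltW.
by rewrite mulrA (divfK (lt0r_neq0 k_gt0)).
Qed.

Lemma eigen_negL_lower_bound k lam : lam != 0 -> eigen_negL c alpha k lam -> m * g <= lam.
Proof.
elim: k lam => [|k IHk] lam lam_neq0; first by move/(eigen_negL0 lam_neq0).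
move=> [f [[eta0 [eta0_in f_eta0]] eig]].
case: (pselect (exists xi, inXi k xi /\ lowering alpha f xi != 0)) => [lowered|not_lowered].
  apply: IHk lam_neq0 _; exists (lowering alpha f); split => // xi xi_in.
  rewrite -Lgen_lowering // -sumrN /lowering mulr_sumr; apply: eq_bigr => x _.
  by rewrite -mulrN eig ?inXi_add_particle //; ring.
have lowered0 xi : inXi k xi -> lowering alpha f xi = 0.
  by move=> xi_in; apply/eqP; apply: contraT => nz; case: not_lowered; exists xi.
have norm_gt0 := sumXi_norm_gt0 alpha_gt0 eta0_in f_eta0.
set N := sumXi _ _ _ in norm_gt0 *.
rewrite -(ler_pM2r norm_gt0) /N (eigen_rayleigh c_sym eig) -/N.
have -> : m * g * N = (m * g / k.+1%:R) * (k.+1%:R * N).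
  by rewrite mulrA divfK // pnatr_eq0.
rewrite /N sumXi_norm mulr_sumr; apply: ler_sum => e e_in.
rewrite mulrCA; apply: ler_wpM2l; first exact: ltW (mu_weight_gt0 _ alpha_gt0).
exact: poincare_rate e_in (lowered0 _ e_in).
Qed.

End LowerBound.

Lemma continuous_sumr (R : realType) (T : topologicalType) (I : Type) (r : seq I)
    (F : I -> T -> R) :
  (forall i, continuous (F i)) -> continuous (fun t => \sum_(i <- r) F i t).
Proof. by move=> Fc; apply: continuous_big => //; exact: add_continuous. Qed.

Lemma continuous_mulr (R : realType) (T : topologicalType) (f g : T -> R) :
  continuous f -> continuous g -> continuous (fun t => f t * g t).
Proof. by move=> f_cont g_cont t; apply: continuousM; [exact: f_cont | exact: g_cont]. Qed.

Lemma continuous_sqr (R : realType) (T : topologicalType) (f : T -> R) :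
  continuous f -> continuous (fun t => f t ^+ 2).
Proof.
move=> f_cont; have -> : (fun t => f t ^+ 2) = (fun t => f t * f t).
  by apply: funext => t; rewrite expr2.
exact: continuous_mulr.
Qed.

Local Open Scope classical_set_scope.
Lemma continuous_min_level_set (R : realType) n (F G1 G2 : 'rV[R]_n -> R) (B : R) :
  continuous F -> continuous G1 -> continuous G2 ->
  (forall v, G1 v = 0 -> G2 v = 1 -> forall i, `|v ord0 i| <= B) ->
  (exists v, G1 v = 0 /\ G2 v = 1) ->
  exists v, [/\ G1 v = 0, G2 v = 1 & forall w, G1 w = 0 -> G2 w = 1 -> F v <= F w].
Proof.
move=> F_cont G1_cont G2_cont bounded [v0 [G1v0 G2v0]].
set A := [set v | G1 v = 0 /\ G2 v = 1].
have A_closed : closed A.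
  have -> : A = (G1 @^-1` [set 0]) `&` (G2 @^-1` [set 1]) by [].
  by apply: closedI; apply: preimage_closed;
    [move=> v _; exact: G1_cont | exact: closed_eq | move=> v _; exact: G2_cont | exact: closed_eq].
have A_bounded : bounded_set A.
  exists `|B|; split; first by rewrite realE normr_ge0.
  move=> M BM v [G1v G2v]; rewrite /= [leLHS]/Num.norm /= mx_normrE.
  apply: bigmax_le => [|[i j] _ /=]; first exact: le_trans (normr_ge0 _) (ltW BM).
  rewrite (ord1 i); exact: le_trans (bounded v G1v G2v j) (le_trans (ler_norm _) (ltW BM)).
have [v vA vmin] := @EVT_min_rV R n F A (ex_intro _ v0 (conj G1v0 G2v0))
  (bounded_closed_compact A_bounded A_closed) (continuous_subspaceT F_cont).
move: vA; rewrite inE => -[G1v G2v]; exists v; split => // w G1w G2w.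
by apply: vmin; rewrite inE.
Qed.
Local Close Scope classical_set_scope.

Lemma linear_eq0_of_quadratic_ge0 (R : realFieldType) (a b : R) :
  (forall t, 0 <= t * b + t ^+ 2 * a) -> b = 0.
Proof.
move=> quad_ge0; set D := `|a| + 1.
have D_gt0 : 0 < D by rewrite /D; have := normr_ge0 a; lra.
pose t := - b / (2%:R * D).
have quad_t : (2%:R * D) ^+ 2 * (t * b + t ^+ 2 * a) = b ^+ 2 * (a - 2%:R * D).
  by rewrite /t; field; rewrite gt_eqF //; lra.
have : 0 <= b ^+ 2 * (a - 2%:R * D) by rewrite -quad_t mulr_ge0 ?sqr_ge0.
have : a - 2%:R * D < 0 by rewrite /D; have := ler_norm a; have := normr_ge0 a; lra.
by move=> neg ge0; apply/eqP; rewrite -sqrf_eq0 eq_le sqr_ge0 andbT; nra.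
Qed.

Section MinimizerExists.
Variables (R : realType) (V : finType) (c : V -> V -> R) (alpha : V -> R).
Hypothesis alpha_gt0 : forall x, 0 < alpha x.
Implicit Types (h : V -> R).
Local Notation n := #|V|.

Definition fun_of_rV (v : 'rV[R]_n) : V -> R := fun x => v ord0 (enum_rank x).
Definition rV_of_fun h : 'rV[R]_n := \row_i h (enum_val i).

Lemma rV_of_funK h : fun_of_rV (rV_of_fun h) = h.
Proof. by apply: funext => x; rewrite /fun_of_rV mxE enum_rankK. Qed.

Lemma continuous_fun_of_rV x : continuous (fun v => fun_of_rV v x).
Proof. exact: coord_continuous. Qed.

Lemma continuous_wsum : continuous (fun v => wsum alpha (fun_of_rV v)).
Proof.
apply: continuous_sumr => x; apply: continuous_mulr; first exact: cst_continuous.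
exact: continuous_fun_of_rV.
Qed.

Lemma continuous_wsum2 : continuous (fun v => wsum2 alpha (fun_of_rV v)).
Proof.
apply: continuous_sumr => x; apply: continuous_mulr; first exact: cst_continuous.
exact: continuous_sqr (continuous_fun_of_rV (x := x)).
Qed.

Lemma continuous_dirichlet : continuous (fun v => dirichlet c alpha (fun_of_rV v)).
Proof.
apply: continuous_sumr => x; apply: continuous_sumr => y.
apply: continuous_mulr; first exact: cst_continuous.
apply: continuous_sqr => v; apply: continuousB; exact: continuous_fun_of_rV.
Qed.

Lemma wsum2_eq1_bound h x : wsum2 alpha h = 1 -> `|h x| <= 1 + \sum_y (alpha y)^-1.
Proof.
move=> h_norm; have alpha_x_gt0 := alpha_gt0 x.
have hx2 : h x ^+ 2 <= (alpha x)^-1.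
  rewrite -(ler_pM2l alpha_x_gt0) mulrV ?unitf_gt0 // -h_norm /wsum2 (bigD1 x) //=.
  by rewrite lerDl sumr_ge0 // => y _; rewrite mulr_ge0 ?sqr_ge0 // ltW.
have : (alpha x)^-1 <= \sum_y (alpha y)^-1.
  by rewrite (bigD1 x) //= lerDl sumr_ge0 // => y _; rewrite invr_ge0 ltW.
have : `|h x| <= 1 + h x ^+ 2.
  by rewrite -real_normK ?num_real //; have := normr_ge0 (h x); nra.
lra.
Qed.

Lemma dirichlet_min_exists : (exists h, wsum alpha h = 0 /\ wsum2 alpha h = 1) ->
  exists hs, [/\ wsum alpha hs = 0, wsum2 alpha hs = 1 &
    forall h, wsum alpha h = 0 -> wsum2 alpha h = 1 -> dirichlet c alpha hs <= dirichlet c alpha h].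
Proof.
move=> [h0 [h0_centered h0_norm]].
have bound v : wsum alpha (fun_of_rV v) = 0 -> wsum2 alpha (fun_of_rV v) = 1 ->
    forall i, `|v ord0 i| <= 1 + \sum_y (alpha y)^-1.
  by move=> _ v_norm i; rewrite -[i]enum_valK; exact: wsum2_eq1_bound (enum_val i) v_norm.
have [|v [v_centered v_norm v_min]] := continuous_min_level_set continuous_dirichlet
    continuous_wsum continuous_wsum2 bound.
  by exists (rV_of_fun h0); rewrite rV_of_funK.
exists (fun_of_rV v); split => // h h_centered h_norm.
by have := v_min (rV_of_fun h); rewrite rV_of_funK; apply.
Qed.

End MinimizerExists.

Section EulerLagrange.
Variables (R : realType) (V : finType) (c : V -> V -> R) (alpha : V -> R).
Hypothesis c_sym : forall x y, c x y = c y x.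
Hypothesis c_ge0 : forall x y, 0 <= c x y.
Hypothesis c_conn : forall x y, connect (fun u v => 0 < c u v) x y.
Hypothesis alpha_gt0 : forall x, 0 < alpha x.
Implicit Types (h u : V -> R).

Definition wdot h u := \sum_x alpha x * h x * u x.
Definition dirichlet_bilin h u :=
  \sum_x \sum_y alpha x * alpha y * c x y * (u y - u x) * (h y - h x).

Lemma wsum_addZ h u t :
  wsum alpha (fun x => h x + t * u x) = wsum alpha h + t * wsum alpha u.
Proof. by rewrite /wsum mulr_sumr -big_split; apply: eq_bigr => x _ /=; ring. Qed.

Lemma wsum2_addZ h u t : wsum2 alpha (fun x => h x + t * u x) =
  wsum2 alpha h + (2%:R * t) * wdot h u + t ^+ 2 * wsum2 alpha u.
Proof. by rewrite /wsum2 /wdot !mulr_sumr -!big_split /=; apply: eq_bigr => x _; ring. Qed.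

Lemma dirichlet_addZ h u t : dirichlet c alpha (fun x => h x + t * u x) =
  dirichlet c alpha h + (2%:R * t) * dirichlet_bilin h u + t ^+ 2 * dirichlet c alpha u.
Proof.
rewrite /dirichlet /dirichlet_bilin !mulr_sumr -!big_split /=; apply: eq_bigr => x _.
by rewrite !mulr_sumr -!big_split /=; apply: eq_bigr => y _; ring.
Qed.

Lemma wsum2_normalize h : wsum alpha h = 0 -> 0 < wsum2 alpha h ->
  exists s, [/\ wsum alpha (fun x => s * h x) = 0, wsum2 alpha (fun x => s * h x) = 1 &
    dirichlet c alpha (fun x => s * h x) = dirichlet c alpha h / wsum2 alpha h].
Proof.
move=> h_centered h_pos; exists (Num.sqrt (wsum2 alpha h))^-1.
have s2 : (Num.sqrt (wsum2 alpha h))^-1 ^+ 2 = (wsum2 alpha h)^-1.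
  by rewrite exprVn sqr_sqrtr // ltW.
by rewrite wsumZ h_centered mulr0 wsum2Z dirichletZ s2 mulVf ?gt_eqF // mulrC.
Qed.

Lemma dirichlet_bilin_indicator h z :
  dirichlet_bilin h (fun x => (x == z)%:R) = - 2%:R * (alpha z * rw_gen c alpha h z).
Proof.
have K_sym x y : alpha x * alpha y * c x y = alpha y * alpha x * c y x by rewrite c_sym; ring.
have := @discrete_green R V (fun x y => alpha x * alpha y * c x y) (fun x => (x == z)%:R) h K_sym.
have -> : \sum_x \sum_y alpha x * alpha y * c x y * (x == z)%:R * (h y - h x) =
    alpha z * rw_gen c alpha h z.
  transitivity (\sum_x (x == z)%:R * \sum_y alpha x * alpha y * c x y * (h y - h x)).
    by apply: eq_bigr => x _; rewrite mulr_sumr; apply: eq_bigr => y _; ring.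
  by rewrite sumr_indicator /rw_gen mulr_sumr; apply: eq_bigr => y _; ring.
by rewrite /dirichlet_bilin => ->; field.
Qed.

Lemma wdot_indicator h z : wdot h (fun x => (x == z)%:R) = alpha z * h z.
Proof. by rewrite /wdot; under eq_bigr => x _ do rewrite mulrC; rewrite sumr_indicator. Qed.

Lemma dirichlet_eq0_const h : dirichlet c alpha h = 0 -> forall x y, h x = h y.
Proof.
move=> Q0.
have term_ge0 x y : 0 <= alpha x * alpha y * c x y * (h y - h x) ^+ 2.
  by rewrite mulr_ge0 ?sqr_ge0 // !mulr_ge0 // ltW.
have term0 x y : alpha x * alpha y * c x y * (h y - h x) ^+ 2 = 0.
  have row_ge0 x' : 0 <= \sum_y alpha x' * alpha y * c x' y * (h y - h x') ^+ 2.
    exact: sumr_ge0.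
  have row0 := @psumr_eq0P _ _ _ _ (fun x' _ => row_ge0 x') Q0 x isT.
  exact: @psumr_eq0P _ _ _ _ (fun y _ => term_ge0 x y) row0 y isT.
have edge x y : 0 < c x y -> h y = h x.
  move=> cxy; move/eqP: (term0 x y).
  rewrite !mulf_eq0 !(gt_eqF (alpha_gt0 _)) (gt_eqF cxy) /=.
  by rewrite orbb subr_eq0 => /eqP.
move=> x y; have /connectP[p path_p ->] := c_conn x y.
elim: p x path_p => //= z p IHp x /andP[cxz path_p].
by rewrite -IHp // (edge _ _ cxz).
Qed.

Lemma dirichlet_gt0 h : wsum alpha h = 0 -> wsum2 alpha h = 1 -> 0 < dirichlet c alpha h.
Proof.
move=> h_centered h_norm.
have Q_ge0 : 0 <= dirichlet c alpha h by apply: dirichlet_ge0 => // x; exact: ltW (alpha_gt0 x).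
rewrite lt_neqAle Q_ge0 andbT eq_sym; apply/eqP => /dirichlet_eq0_const h_const.
have [x0 _|V0] := pickP (fun _ : V => true); last first.
  by move: h_norm; rewrite /wsum2 big_pred0 // => /eqP; rewrite eq_sym oner_eq0.
have : wsum2 alpha h = h x0 * wsum alpha h.
  by rewrite /wsum2 /wsum mulr_sumr; apply: eq_bigr => x _; rewrite (h_const x x0); ring.
by rewrite h_centered mulr0 h_norm => /eqP; rewrite oner_eq0.
Qed.

Section Minimizer.
Variable hs : V -> R.
Hypothesis hs_centered : wsum alpha hs = 0.
Hypothesis hs_norm : wsum2 alpha hs = 1.
Hypothesis hs_min : forall h, wsum alpha h = 0 -> wsum2 alpha h = 1 ->
  dirichlet c alpha hs <= dirichlet c alpha h.
Local Notation q := (dirichlet c alpha hs).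

Lemma dirichlet_min_le h : wsum alpha h = 0 -> q * wsum2 alpha h <= dirichlet c alpha h.
Proof.
move=> h_centered; have := wsum2_ge0 h (fun x => ltW (alpha_gt0 x)).
rewrite le_eqVlt => /orP[/eqP <-|h_pos].
  by rewrite mulr0; apply: dirichlet_ge0 => // x; exact: ltW (alpha_gt0 x).
have [s [s_centered s_norm s_Q]] := wsum2_normalize h_centered h_pos.
by rewrite -ler_pdivlMr // -s_Q; apply: hs_min.
Qed.

Lemma dirichlet_min_euler_centered u : wsum alpha u = 0 -> dirichlet_bilin hs u = q * wdot hs u.
Proof.
move=> u_centered.
suff : 2%:R * (dirichlet_bilin hs u - q * wdot hs u) = 0.
  by move/eqP; rewrite mulf_eq0 pnatr_eq0 /= subr_eq0 => /eqP.
apply: (@linear_eq0_of_quadratic_ge0 _ (dirichlet c alpha u - q * wsum2 alpha u)) => t.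
have perturbed_centered : wsum alpha (fun x => hs x + t * u x) = 0.
  by rewrite wsum_addZ hs_centered u_centered mulr0 addr0.
have := dirichlet_min_le perturbed_centered.
rewrite wsum2_addZ dirichlet_addZ hs_norm -subr_ge0.
by congr (0 <= _); ring.
Qed.

Lemma dirichlet_min_euler u : dirichlet_bilin hs u = q * wdot hs u.
Proof.
have [x0 _|V0] := pickP (fun _ : V => true); last first.
  by move: hs_norm; rewrite /wsum2 big_pred0 // => /eqP; rewrite eq_sym oner_eq0.
have A_neq0 : \sum_x alpha x != 0.
  rewrite gt_eqF // (bigD1 x0) //= ltr_pwDl ?alpha_gt0 //.
  by rewrite sumr_ge0 // => x _; rewrite ltW.
set M := wsum alpha u / \sum_x alpha x.
have := dirichlet_min_euler_centered (wsum_center u A_neq0); rewrite -/M.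
have -> : dirichlet_bilin hs (fun x => u x - M) = dirichlet_bilin hs u.
  by apply: eq_bigr => x _; apply: eq_bigr => y _; congr (_ * _ * _); ring.
have -> : wdot hs (fun x => u x - M) = wdot hs u - M * wsum alpha hs.
  by rewrite /wdot /wsum mulr_sumr -sumrB; apply: eq_bigr => x _; ring.
by rewrite hs_centered mulr0 subr0.
Qed.

Lemma dirichlet_min_eigen x : - rw_gen c alpha hs x = q / 2 * hs x.
Proof.
have := dirichlet_min_euler (fun y => (y == x)%:R).
rewrite dirichlet_bilin_indicator wdot_indicator => euler_x.
have alpha_x_neq0 := lt0r_neq0 (alpha_gt0 x).
have -> : - rw_gen c alpha hs x =
    - 2%:R * (alpha x * rw_gen c alpha hs x) / (2%:R * alpha x) by field.
by rewrite euler_x; field.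
Qed.

End Minimizer.

Lemma rw_spectral_gap_exists : (exists h, wsum alpha h = 0 /\ 0 < wsum2 alpha h) ->
  exists gs, [/\ 0 < gs, eigen_negL c alpha 1 gs &
    forall h, wsum alpha h = 0 -> gs * wsum2 alpha h <= dirichlet c alpha h / 2].
Proof.
move=> [h0 [h0_centered h0_pos]].
have [s [s_centered s_norm _]] := wsum2_normalize h0_centered h0_pos.
have [hs [hs_centered hs_norm hs_min]] :=
  dirichlet_min_exists c alpha_gt0 (ex_intro _ _ (conj s_centered s_norm)).
exists (dirichlet c alpha hs / 2); split.
- by rewrite divr_gt0 // dirichlet_gt0.
- apply: (eigen_negL_lift c_sym (ltn0Sn 0) (dirichlet_min_eigen hs_centered hs_norm hs_min)).
  by apply: (@wsum2_neq0 _ _ alpha); rewrite hs_norm oner_neq0.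
- move=> h h_centered; rewrite mulrAC; apply: ler_wpM2r; first by rewrite invr_ge0.
  exact: dirichlet_min_le.
Qed.

End EulerLagrange.

Section SingleParticle.
Variables (R : realType) (V : finType) (c : V -> V -> R) (alpha : V -> R).

Definition empty_conf : conf V := [ffun _ => 0%N].

Lemma inXi_empty_conf : inXi 0 empty_conf.
Proof. by rewrite /inXi big1 // => x _; rewrite ffunE. Qed.

Lemma inXi1P eta : inXi 1 eta -> exists x, eta = add_particle empty_conf x.
Proof.
move=> eta_in; have [x ex|eta0] := pickP (fun x => 0 < eta x)%N; last first.
  move: eta_in; rewrite /inXi big1 // => x _.
  by apply/eqP; rewrite eqn0Ngt eta0.
exists x; move: eta_in; rewrite /inXi (bigD1 x) //= => /eqP sum_eta.
have others0 : (\sum_(y | y != x) eta y = 0)%N by lia.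
have eta_x : eta x = 1%N by lia.
move/eqP: others0; rewrite sum_nat_eq0 => /forallP others0.
apply/ffunP => z; rewrite !ffunE; case: (eqVneq z x) => [->|zx] /=; first by rewrite eta_x.
by move/implyP: (others0 z) => /(_ zx)/eqP ->.
Qed.

Lemma eigen_negL1_rw lam : eigen_negL c alpha 1 lam ->
  exists h, (forall x, - rw_gen c alpha h x = lam * h x) /\ exists x, h x != 0.
Proof.
move=> [f [[eta0 [eta0_in f_eta0]] eig]].
exists (fun x => f (add_particle empty_conf x)); split; last first.
  by have [x0 eta0E] := inXi1P eta0_in; exists x0; rewrite -eta0E.
move=> x; have := eig (add_particle empty_conf x).
rewrite inXi_add_particle inXi_empty_conf => /(_ isT).
rewrite Lgen_add_particle big1 ?add0r => [|u _]; last by rewrite ffunE mul0r.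
move=> <-; congr (- _); apply: eq_bigr => v _; rewrite /rate ffunE addr0.
by case: (eqVneq v x) => [->|_]; rewrite ?subrr ?mulr0 // addr0.
Qed.

Lemma eigen_negL_subsingleton k lam : (forall x y : V, x = y) -> lam != 0 ->
  ~ eigen_negL c alpha k lam.
Proof.
move=> V_sub lam_neq0 [f [[eta0 [eta0_in f_eta0]] eig]].
move: (eig eta0 eta0_in); rewrite /Lgen big1 => [|x _]; last first.
  case: (posnP (eta0 x)) => [->|ex]; first by rewrite mul0r.
  by rewrite big1 ?mulr0 // => y _; rewrite -(V_sub x y) move_id // subrr mulr0.
by move/eqP; rewrite oppr0 eq_sym mulf_eq0 (negbTE lam_neq0) (negbTE f_eta0).
Qed.

End SingleParticle.

Local Open Scope classical_set_scope.

Lemma alpha_min_ge0 (R : realType) (V : finType) (alpha : V -> R) :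
  (forall x, 0 < alpha x) -> 0 <= alpha_min alpha.
Proof.
move=> alpha_gt0; have [range_ne|range_empty] := pselect (range alpha !=set0).
  by apply: lb_le_inf range_ne _ => _ [y _ <-]; exact: ltW.
suff range0 : range alpha = set0 by rewrite /alpha_min range0 inf0.
by apply/seteqP; split => // a ra; case: range_empty; exists a.
Qed.

Lemma alpha_min_le (R : realType) (V : finType) (alpha : V -> R) x :
  (forall x, 0 < alpha x) -> alpha_min alpha <= alpha x.
Proof.
move=> alpha_gt0; apply: ge_inf; last by exists x.
by exists 0 => _ [y _ <-]; exact: ltW.
Qed.

Section Gaps.
Variables (R : realType) (V : finType) (c : V -> V -> R) (alpha : V -> R).
Hypothesis c_sym : forall x y, c x y = c y x.
Hypothesis c_ge0 : forall x y, 0 <= c x y.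
Hypothesis c_conn : forall x y, connect (fun u v => 0 < c u v) x y.
Hypothesis alpha_gt0 : forall x, 0 < alpha x.
Local Notation eigs k := [set lam : R | lam != 0 /\ eigen_negL c alpha k lam].

Lemma eigs_lbound k : (0 < k)%N -> lbound (eigs k) 0.
Proof.
by case: k => // k _ lam [_ eig]; move: (eigen_negL_ge0 c_sym c_ge0 alpha_gt0 eig).
Qed.

Lemma gap_ge0 k : (0 < k)%N -> 0 <= gap c alpha k.
Proof.
move=> k_gt0; have [eigs_ne|eigs_empty] := pselect (eigs k !=set0).
  exact: lb_le_inf eigs_ne (eigs_lbound k_gt0).
suff eigs0 : eigs k = set0 by rewrite /gap eigs0 inf0.
by apply/seteqP; split => // lam lam_eig; case: eigs_empty; exists lam.
Qed.

Lemma eigs1_sub k : (0 < k)%N -> eigs 1 `<=` eigs k.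
Proof.
move=> k_gt0 lam [lam_neq0 /eigen_negL1_rw[h [eigh h_neq0]]]; split => //.
by apply: (eigen_negL_lift c_sym k_gt0 eigh).
Qed.

Lemma poincare_gapRW h : wsum alpha h = 0 ->
  gapRW c alpha * wsum2 alpha h <= dirichlet c alpha h / 2.
Proof.
move=> h_centered; have := wsum2_ge0 h (fun x => ltW (alpha_gt0 x)).
rewrite le_eqVlt => /orP[/eqP <-|h_pos].
  by rewrite mulr0 divr_ge0 // dirichlet_ge0 // => x; exact: ltW (alpha_gt0 x).
have [gs [gs_gt0 gs_eig gs_poincare]] := rw_spectral_gap_exists c_sym c_ge0 c_conn alpha_gt0
  (ex_intro _ h (conj h_centered h_pos)).
apply: le_trans (gs_poincare h h_centered); apply: ler_wpM2r; first exact: ltW.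
by apply: ge_inf; [exists 0; exact: eigs_lbound | split => //; exact: lt0r_neq0].
Qed.

Lemma gap_ge_gapRW k m : (0 < k)%N -> 0 <= m -> m <= 1 -> (forall x, m <= alpha x) ->
  m * gapRW c alpha <= gap c alpha k.
Proof.
move=> k_gt0 m_ge0 m_le1 m_le_alpha.
have [[lam0 lam0_eig]|eigs_empty] := pselect (eigs k !=set0).
  apply: lb_le_inf => [|lam [lam_neq0 lam_eig]]; first by exists lam0.
  by apply: (eigen_negL_lower_bound c_sym c_ge0 alpha_gt0 (gap_ge0 (ltn0Sn 0)) m_ge0 m_le1
    m_le_alpha poincare_gapRW (k := k) lam_neq0).
suff -> : gapRW c alpha = 0 by rewrite mulr0 gap_ge0.
rewrite /gapRW /gap; suff -> : eigs 1 = set0 by rewrite inf0.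
by apply/seteqP; split => // lam lam_eig; case: eigs_empty; exists lam; exact: eigs1_sub.
Qed.

Lemma eigs1_nonempty (x y : V) : x != y -> eigs 1 !=set0.
Proof.
move=> xy; pose h z := (z == x)%:R / alpha x - (z == y)%:R / alpha y.
have wsum_indicator w : \sum_z alpha z * ((z == w)%:R / alpha w) = 1.
  transitivity (\sum_z (z == w)%:R * (alpha z / alpha w)).
    by apply: eq_bigr => z _; rewrite mulrCA mulrA.
  by rewrite sumr_indicator divff // lt0r_neq0.
have h_centered : wsum alpha h = 0.
  by rewrite /wsum /h; under eq_bigr => z _ do rewrite mulrBr; rewrite sumrB !wsum_indicator subrr.
have h_pos : 0 < wsum2 alpha h.
  rewrite /wsum2 (bigD1 x) //=; apply: ltr_pwDl.
    rewrite /h eqxx (negbTE xy) mul0r subr0 mul1r mulr_gt0 //.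
    by rewrite exprn_gt0 // invr_gt0.
  by apply: sumr_ge0 => z _; rewrite mulr_ge0 ?sqr_ge0 // ltW.
have [gs [gs_gt0 gs_eig _]] := rw_spectral_gap_exists c_sym c_ge0 c_conn alpha_gt0
  (ex_intro _ h (conj h_centered h_pos)).
by exists gs; split => //; exact: lt0r_neq0.
Qed.

(* [inf set0 = 0]: if the walk has no nonzero eigenvalue, V has at most one vertex and
   all the gaps vanish. *)
Lemma gap2_le_gapRW : gap c alpha 2 <= gapRW c alpha.
Proof.
have [[lam1 lam1_eig]|no_eig1] := pselect (eigs 1 !=set0).
  apply: lb_le_inf => [|lam lam_eig]; first by exists lam1.
  apply: ge_inf; first by exists 0; exact: eigs_lbound.
  exact: eigs1_sub.
suff eigs2 : eigs 2 = set0 by rewrite /gap eigs2 inf0; exact: gap_ge0.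
apply/seteqP; split => // lam [lam_neq0 lam_eig].
apply: eigen_negL_subsingleton lam_neq0 lam_eig => x y.
by apply/eqP; apply: contraT => xy; case: no_eig1; exact: eigs1_nonempty xy.
Qed.

End Gaps.

Theorem theorem1p1 (R : realType) (V : finType) (c : V -> V -> R) (alpha : V -> R)
  (c_sym : forall x y, c x y = c y x)
  (c_ge0 : forall x y, 0 <= c x y)
  (c_conn : forall x y, connect (fun u v => 0 < c u v) x y)
  (alpha_gt0 : forall x, 0 < alpha x) :
  Num.min 1 (alpha_min alpha) * gapRW c alpha <= gapSIP c alpha /\
  gapSIP c alpha <= gapRW c alpha.
Proof.
set m := Num.min 1 (alpha_min alpha).
have m_ge0 : 0 <= m by rewrite le_min ler01 alpha_min_ge0.
have m_le1 : m <= 1 by rewrite ge_min lexx.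
have m_le_alpha x : m <= alpha x by rewrite ge_min (alpha_min_le x alpha_gt0) orbT.
have k_gt0 k : (2 <= k)%N -> (0 < k)%N by move/(leq_trans _); apply.
split; rewrite /gapSIP.
- apply: lb_le_inf => [|_ [k k_ge2 <-]]; first by exists (gap c alpha 2); exists 2%N.
  by apply: (gap_ge_gapRW c_sym c_ge0 c_conn alpha_gt0 (k_gt0 k k_ge2)).
- apply: le_trans (gap2_le_gapRW c_sym c_ge0 c_conn alpha_gt0); apply: ge_inf; last by exists 2%N.
  by exists 0 => _ [k k_ge2 <-]; apply: (gap_ge0 c_sym c_ge0 alpha_gt0 (k_gt0 k k_ge2)).
Qed.
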